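(* Let $\{0,1\}$ carry the discrete topology and define $f:\mathbb R\times\mathbb R\to\{0,1\}$ by $f(x,y)=1$ if $x-y\in\mathbb Q$ and $f(x,y)=0$ otherwise. Then for every nonempty open $V\subset\mathbb R$ the set-valued mapping $\mathbb R\ni x\mapsto f_x(V)\in 2^{\{0,1\}}$ is lower quasicontinuous, yet there is no point of $\mathbb R\times\mathbb R$ at which $f$ is horizontally quasicontinuous.
   Context: $f_x(y)=f(x,y)$; $2^Z$ is the set of nonempty subsets of $Z$. A set-valued mapping $F:X\to 2^Z$ is lower quasicontinuous (at every point) if for each $x_0\in X$, each neighborhood $U$ of $x_0$ and each open $W\subset Z$ with $F(x_0)\cap W\neq\emptyset$, there is an open $O$ with $\emptyset\neq O\subset U$ and $F(x)\cap W\neq\emptyset$ for all $x\in O$. $f:X\times Y\to Z$ is horizontally quasicontinuous at $(a,b)$ if for each neighborhood $U$ of $a$, $V$ of $b$, $W$ of $f(a,b)$, there are an open $O$ with $\emptyset\neq O\subset U$ and $y\in V$ with $f(O\times\{y\})\subset W$. *)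

From Stdlib Require Import Reals QArith Classical ClassicalEpsilon.
Open Scope R_scope.

Definition openR (O : R -> Prop) : Prop :=
  forall x, O x -> exists e, 0 < e /\ forall y, Rabs (y - x) < e -> O y.

Definition nbhdR (a : R) (U : R -> Prop) : Prop :=
  exists O, openR O /\ O a /\ forall x, O x -> U x.

(* {0,1} with the discrete topology: represented by bool, every subset open;
   a neighborhood of z is any set containing z. *)
Definition nbhdB (z : bool) (W : bool -> Prop) : Prop := W z.

Definition is_rational (r : R) : Prop := exists q : Q, r = Q2R q.

Definition f_rat (x y : R) : bool :=
  if excluded_middle_informative (is_rational (x - y)) then true else false.

Definition fx_image (f : R -> R -> bool) (V : R -> Prop) (x : R) (z : bool) : Prop :=
  exists y, V y /\ f x y = z.

(* Lower quasicontinuity at every point of a set-valued map F : R -> 2^{0,1}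
   (Z discrete, so every W : bool -> Prop is open). *)
Definition lower_quasicontinuous (F : R -> bool -> Prop) : Prop :=
  forall x0 (U : R -> Prop) (W : bool -> Prop),
    nbhdR x0 U -> (exists z, F x0 z /\ W z) ->
    exists O : R -> Prop, openR O /\ (exists x, O x) /\ (forall x, O x -> U x) /\
      forall x, O x -> exists z, F x z /\ W z.

Definition horiz_quasicontinuous_at (f : R -> R -> bool) (a b : R) : Prop :=
  forall (U V : R -> Prop) (W : bool -> Prop),
    nbhdR a U -> nbhdR b V -> nbhdB (f a b) W ->
    exists O : R -> Prop, openR O /\ (exists x, O x) /\ (forall x, O x -> U x) /\
      exists y, V y /\ forall x, O x -> W (f x y).

(* Both rationals and irrationals are dense in R, so every value of [f] is
   taken in every ball, horizontally and vertically: [f x (y - h) = f (x + h) y]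
   and [h] can be chosen with [x - y + h] rational or irrational.  Hence
   [x |-> f_x(V)] is the constant map [{0,1}], trivially lower quasicontinuous,
   while no nonempty open [O] admits a [y] with [f(O x {y})] constant. *)

From Stdlib Require Import Reals QArith.
From Stdlib Require Import Lra Lia ZArith Znumtheory Qreduction Qcanon Qreals ClassicalEpsilon.
Open Scope R_scope.

Lemma is_rational_add a b :
  is_rational a -> is_rational b -> is_rational (a + b).
Proof. intros [p ->] [q ->]. exists (p + q)%Q. now rewrite Q2R_plus. Qed.

Lemma is_rational_opp a : is_rational a -> is_rational (- a).
Proof. intros [p ->]. exists (- p)%Q. now rewrite Q2R_opp. Qed.

Lemma Zsquare_neq_double_square_coprime n d :
  Z.gcd n d = 1%Z -> (n * n <> 2 * (d * d))%Z.
Proof.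
  intros Hgcd E.
  assert (Hn : (2 | n)%Z).
  { destruct (prime_mult 2 prime_2 n n) as [H | H]; auto; exists (d * d)%Z; lia. }
  destruct Hn as [k ->].
  assert (Hd : (2 | d)%Z).
  { destruct (prime_mult 2 prime_2 d d) as [H | H]; auto; exists (k * k)%Z; lia. }
  assert (H2 : (2 | Z.gcd (k * 2) d)%Z)
    by (apply Z.gcd_greatest; [now exists k | exact Hd]).
  rewrite Hgcd in H2. apply Z.divide_1_r in H2. lia.
Qed.

Lemma Qsquare_neq_2 q : ~ (q * q == 2)%Q.
Proof.
  rewrite <- (Qred_correct q).
  assert (Hgcd : Z.gcd (Qnum (Qred q)) (Zpos (Qden (Qred q))) = 1%Z)
    by (apply Qred_iff, Qred_involutive).
  destruct (Qred q) as [n d]; simpl in Hgcd. unfold Qeq; simpl.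
  intro E.
  apply (Zsquare_neq_double_square_coprime n (Zpos d)); lia.
Qed.

Lemma sqrt2_irrational : ~ is_rational (sqrt 2).
Proof.
  intros [q Hq]. apply (Qsquare_neq_2 q), eqR_Qeq.
  rewrite Q2R_mult, <- Hq, sqrt_sqrt by lra.
  unfold Q2R; simpl; field.
Qed.

Lemma rational_dense p e : 0 < e -> exists r, is_rational r /\ Rabs (r - p) < e.
Proof.
  intros He.
  destruct (archimed (/ e)) as [Hn _]. set (n := up (/ e)) in *.
  assert (Hie : 0 < / e) by (apply Rinv_0_lt_compat; lra).
  assert (HnZ : (0 < n)%Z) by (apply lt_0_IZR; lra).
  assert (HnR : 0 < IZR n) by (apply IZR_lt; lia).
  destruct (archimed (p * IZR n)) as [Hm1 Hm2]. set (m := up (p * IZR n)) in *.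
  exists (IZR m / IZR n). split.
  - exists (Qmake m (Z.to_pos n)). unfold Q2R; simpl. now rewrite Z2Pos.id.
  - assert (Hlow : p < IZR m / IZR n)
      by (apply Rmult_lt_reg_r with (IZR n); [lra | field_simplify; lra]).
    assert (Hup : IZR m / IZR n <= p + / IZR n)
      by (apply Rmult_le_reg_r with (IZR n); [lra | field_simplify; lra]).
    assert (Hinv : / IZR n < e)
      by (rewrite <- (Rinv_inv e); apply Rinv_lt_contravar; nra).
    rewrite Rabs_right; lra.
Qed.

Lemma irrational_dense p e :
  0 < e -> exists r, ~ is_rational r /\ Rabs (r - p) < e.
Proof.
  intros He. destruct (rational_dense (p - sqrt 2) e He) as [q [Hq Hd]].
  exists (q + sqrt 2). split.
  - intro Hr. apply sqrt2_irrational.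
    replace (sqrt 2) with ((q + sqrt 2) + - q) by ring.
    now apply is_rational_add, is_rational_opp.
  - now replace (q + sqrt 2 - p) with (q - (p - sqrt 2)) by ring.
Qed.

Lemma f_ratP x y : f_rat x y = true <-> is_rational (x - y).
Proof.
  unfold f_rat.
  destruct (excluded_middle_informative (is_rational (x - y))); now split.
Qed.

Lemma f_rat_shift x y h : f_rat x (y - h) = f_rat (x + h) y.
Proof. unfold f_rat. now replace (x - (y - h)) with (x + h - y) by ring. Qed.

Lemma f_rat_all_values_near x y e (b : bool) :
  0 < e -> exists h, Rabs h < e /\ f_rat (x + h) y = b.
Proof.
  intros He. destruct b.
  - destruct (rational_dense (x - y) e He) as [r [Hr Hd]].
    exists (r - (x - y)). split; [exact Hd |].
    apply f_ratP. now replace (x + (r - (x - y)) - y) with r by ring.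
  - destruct (irrational_dense (x - y) e He) as [r [Hr Hd]].
    exists (r - (x - y)). split; [exact Hd |].
    destruct (f_rat _ y) eqn:Ef; [| reflexivity].
    apply f_ratP in Ef. now replace (x + (r - (x - y)) - y) with r in Ef by ring.
Qed.

Lemma fx_image_f_rat_full V :
  openR V -> (exists y, V y) -> forall x z, fx_image f_rat V x z.
Proof.
  intros HV [y0 Hy0] x z.
  destruct (HV y0 Hy0) as [e [He HVe]].
  destruct (f_rat_all_values_near x y0 e z He) as [h [Hh Hz]].
  exists (y0 - h). split.
  - apply HVe. now replace (y0 - h - y0) with (- h) by ring; rewrite Rabs_Ropp.
  - now rewrite f_rat_shift.
Qed.

Lemma lower_quasicontinuous_const (F : R -> bool -> Prop) :
  (forall x x' z, F x z -> F x' z) -> lower_quasicontinuous F.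
Proof.
  intros HF x0 U W [O [HO [HOx0 HOU]]] [z [Hz HWz]].
  exists O. repeat split; [exact HO | now exists x0 | exact HOU |].
  intros x _. exists z. split; [exact (HF _ _ _ Hz) | exact HWz].
Qed.

Lemma nbhdR_full a : nbhdR a (fun _ => True).
Proof. exists (fun _ => True). repeat split. intros x _. exists 1. split; [lra | auto]. Qed.

Lemma f_rat_not_horiz_quasicontinuous a b : ~ horiz_quasicontinuous_at f_rat a b.
Proof.
  intros Hqc.
  destruct (Hqc _ _ (fun z => z = f_rat a b) (nbhdR_full a) (nbhdR_full b) eq_refl)
    as [O [HO [[x0 Hx0] [_ [y [_ Hy]]]]]].
  destruct (HO x0 Hx0) as [e [He HOe]].
  destruct (f_rat_all_values_near x0 y e (negb (f_rat a b)) He) as [h [Hh Hneg]].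
  assert (Hin : O (x0 + h)) by (apply HOe; now replace (x0 + h - x0) with h by ring).
  rewrite (Hy _ Hin) in Hneg. now destruct (f_rat a b).
Qed.

Theorem mainTheorem2 :
  (forall V : R -> Prop, openR V -> (exists y, V y) ->
     lower_quasicontinuous (fx_image f_rat V)) /\
  (forall a b : R, ~ horiz_quasicontinuous_at f_rat a b).
Proof.
  split.
  - intros V HV HVne. apply lower_quasicontinuous_const.
    intros x x' z _. exact (fx_image_f_rat_full V HV HVne x' z).
  - exact f_rat_not_horiz_quasicontinuous.
Qed.
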